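(* Let $0<d<\pi/2$, $\mathscr{D}_d=\{\zeta\in\mathbb{C}:|\Im\zeta|<d\}$, $\mathscr{D}_d^{-}=\{\zeta\in\mathscr{D}_d:\Re\zeta<0\}$, $\mathscr{D}_d^{+}=\{\zeta\in\mathscr{D}_d:\Re\zeta\ge0\}$, and $\psi(t)=\sinh[(\pi/2)\sinh t]$. Assume $f$ is analytic on $\psi(\mathscr{D}_d)$ and there are constants $K,\alpha,\beta>0$ with $|f(z)|\le K|1+z^2|^{-(\alpha+1)/2}$ for $z\in\psi(\mathscr{D}_d^-)$ and $|f(z)|\le K|1+z^2|^{-(\beta+1)/2}$ for $z\in\psi(\mathscr{D}_d^+)$. Let $\mu=\min\{\alpha,\beta\}$, $\nu=\max\{\alpha,\beta\}$. Then $F(\zeta)=f(\psi(\zeta))\psi'(\zeta)$ belongs to $\mathbf{L}^{\mathrm{DE}}_{L,R,\alpha,\beta}(\mathscr{D}_d)$ with $L=2^{\nu}K/\{\cos(\frac\pi2\sin d)\}^{(\nu-\mu)/2}$ and $R=2^{\nu}K$.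
   Context: For positive $L,R,\alpha,\beta$ and $0<d<\pi/2$, $\mathbf{L}^{\mathrm{DE}}_{L,R,\alpha,\beta}(\mathscr{D}_d)$ is the set of functions $F$ analytic on $\mathscr{D}_d$ such that for all $\zeta\in\mathscr{D}_d$, $|F(\zeta)|\le\frac{(\pi/2)L|\cosh\zeta|}{|1+e^{-\pi\sinh\zeta}|^{\alpha/2}|1+e^{\pi\sinh\zeta}|^{\beta/2}}$, and for all $x\in\mathbb{R}$, $|F(x)|\le\frac{(\pi/2)R\cosh x}{(1+e^{-\pi\sinh x})^{\alpha/2}(1+e^{\pi\sinh x})^{\beta/2}}$. *)

From Stdlib Require Import Reals.
From Coquelicot Require Import Coquelicot.
Open Scope R_scope.

Definition Cexp (z : C) : C :=
  (exp (Re z) * cos (Im z), exp (Re z) * sin (Im z)).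
Definition Csinh (z : C) : C := ((Cexp z - Cexp (- z)) / 2)%C.
Definition Ccosh (z : C) : C := ((Cexp z + Cexp (- z)) / 2)%C.

Definition strip (d : R) (z : C) : Prop := Rabs (Im z) < d.

Definition analytic_on (S : C -> Prop) (F : C -> C) : Prop :=
  forall z, S z -> @ex_derive C_AbsRing C_NormedModule F z.

Definition psi (t : C) : C := Csinh (RtoC (PI / 2) * Csinh t)%C.
(* its derivative psi'(t) = (pi/2) cosh t cosh((pi/2) sinh t) *)
Definition dpsi (t : C) : C :=
  (RtoC (PI / 2) * Ccosh t * Ccosh (RtoC (PI / 2) * Csinh t))%C.

Definition LDE (L Rr alpha beta d : R) (F : C -> C) : Prop :=
  analytic_on (strip d) F /\
  (forall z : C, strip d z ->
     Cmod (F z) <=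
       (PI / 2) * L * Cmod (Ccosh z) /
       (Rpower (Cmod (1 + Cexp (RtoC (- PI) * Csinh z)))%C (alpha / 2) *
        Rpower (Cmod (1 + Cexp (RtoC PI * Csinh z)))%C (beta / 2))) /\
  (forall x : R,
     Cmod (F (RtoC x)) <=
       (PI / 2) * Rr * cosh x /
       (Rpower (1 + exp (- PI * sinh x)) (alpha / 2) *
        Rpower (1 + exp (PI * sinh x)) (beta / 2))).

From Stdlib Require Import Reals Lra Psatz Machin.
From Coquelicot Require Import Coquelicot.
Open Scope R_scope.

(* Put [w = (PI/2) sinh z].  Then [1 + psi^2 = cosh^2 w], [|psi'| = (PI/2) |cosh z| |cosh w|]
   and [4 |cosh w|^2 = |1 + e^(-PI sinh z)| |1 + e^(PI sinh z)|], so for [Re z < 0] the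
   hypothesis on [f] gives [|F z| <= (PI/2) K |cosh z| 2^alpha |1 + e^(-PI sinh z)|^(-alpha/2)
   |1 + e^(PI sinh z)|^(-alpha/2)].  It remains to trade the exponent [alpha] of the second
   factor for [beta], which only needs [cos((PI/2) sin d) <= |1 + e^(PI sinh z)| <= 2] on the
   left half of the strip.  Writing [e^(PI sinh z) = r e^(iQ)] with [r <= 1], either [|Q|] is
   at most [PI/2 + a] with [a = (PI/2) |sin(Im z)|], or [r <= 1 - cos a]; both give the lower
   bound [cos a].  The right half of the strip follows by the symmetry [z -> -z]. *)

Lemma PI_bounds : 3.14 < PI < 3.15.
Proof.
  destruct (PI_2_3_7_ineq 2) as [Hlo Hhi].
  unfold sum_f_R0, tg_alt, PI_2_3_7_tg, Ratan_seq in Hlo, Hhi; simpl in Hlo, Hhi.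
  lra.
Qed.

Lemma exp_le_exp_compat x y : x <= y -> exp x <= exp y.
Proof.
  intros [Hlt | ->]; [left; apply exp_increasing, Hlt | right; reflexivity].
Qed.

Lemma exp_mul_exp_opp x : exp x * exp (- x) = 1.
Proof. rewrite <- exp_plus, Rplus_opp_r; apply exp_0. Qed.

Lemma Cexp_add u v : Cexp (u + v) = (Cexp u * Cexp v)%C.
Proof.
  destruct u as [x y], v as [x' y']; unfold Cexp; simpl.
  rewrite exp_plus, cos_plus, sin_plus; unfold Cmult; simpl; f_equal; ring.
Qed.

Lemma Cexp_mul_opp z : (Cexp z * Cexp (- z) = 1)%C.
Proof.
  destruct z as [x y]; unfold Cexp; simpl.
  rewrite cos_neg, sin_neg.
  pose proof (exp_mul_exp_opp x) as Hexp; pose proof (sin2_cos2 y) as Hsc.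
  unfold Rsqr in Hsc; unfold Cmult; simpl.
  apply injective_projections; simpl; nra.
Qed.

Lemma Cmod_Cexp z : Cmod (Cexp z) = exp (Re z).
Proof.
  destruct z as [x y]; unfold Cmod, Cexp, Re, Im; simpl.
  replace ((exp x * cos y) * ((exp x * cos y) * 1) + (exp x * sin y) * ((exp x * sin y) * 1))
    with (exp x ^ 2) by (pose proof (sin2_cos2 y); unfold Rsqr in *; simpl; nra).
  apply sqrt_pow2; left; apply exp_pos.
Qed.

Lemma Cmod_le_Rabs_add z : Cmod z <= Rabs (Re z) + Rabs (Im z).
Proof.
  destruct z as [x y]; unfold Cmod, Re, Im; simpl.
  pose proof (Rabs_pos x); pose proof (Rabs_pos y).
  rewrite <- (sqrt_pow2 (Rabs x + Rabs y)) by lra.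
  apply sqrt_le_1_alt; pose proof (pow2_abs x); pose proof (pow2_abs y); simpl in *; nra.
Qed.

Lemma exp_taylor1_le a : Rabs a <= 1/2 -> Rabs (exp a - 1 - a) <= 2 * a ^ 2.
Proof.
  intros Ha; apply Rabs_le_between in Ha.
  pose proof (exp_ineq1_le a); pose proof (exp_ineq1_le (- a)).
  pose proof (exp_mul_exp_opp a); pose proof (exp_pos a).
  assert (exp a * (1 - a) <= 1) by nra.
  apply Rabs_le; split; nra.
Qed.

Lemma cos_taylor1_le b : Rabs b <= 1/2 -> 0 <= 1 - cos b <= b ^ 2 / 2.
Proof.
  intros Hb; apply Rabs_le_between in Hb; pose proof PI_bounds.
  destruct (cos_bound b 0) as [Hlo _]; try lra.
  unfold cos_approx, cos_term in Hlo; simpl in Hlo.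
  pose proof (COS_bound b); split; [lra|].
  unfold Rdiv in *; simpl in *; nra.
Qed.

Lemma sin_taylor1_le b : Rabs b <= 1/2 -> Rabs (sin b - b) <= b ^ 2 /\ Rabs (sin b) <= Rabs b.
Proof.
  assert (Hpos : forall c, 0 <= c <= 1/2 -> 0 <= c - sin c <= c ^ 3 / 6).
  { intros c Hc; pose proof PI_bounds.
    destruct (sin_bound c 0) as [Hlo _]; try lra.
    unfold sin_approx, sin_term in Hlo; simpl in Hlo.
    destruct (Req_dec c 0) as [-> | Hc0]; [rewrite sin_0; lra|].
    pose proof (sin_lt_x c ltac:(lra)).
    unfold Rdiv in *; simpl in *; split; nra. }
  intros Hb; apply Rabs_le_between in Hb.
  destruct (Rle_dec 0 b) as [Hb0 | Hb0].
  - destruct (Hpos b) as [Hl Hu]; [lra|].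
    rewrite (Rabs_pos_eq b) by lra.
    split; apply Rabs_le; split; nra.
  - destruct (Hpos (- b)) as [Hl Hu]; [lra|].
    rewrite sin_neg in Hl, Hu; rewrite (Rabs_left b) by lra.
    split; apply Rabs_le; split; nra.
Qed.

Lemma Cexp_taylor1_le h : Cmod h <= 1/2 -> Cmod (Cexp h - 1 - h)%C <= 5 * Cmod h ^ 2.
Proof.
  destruct h as [a b]; intros Hh.
  assert (Ha : Rabs a <= Cmod (a, b)) by apply (re_le_Cmod (a, b)).
  assert (Hb : Rabs b <= Cmod (a, b)).
  { eapply Rle_trans; [apply Rmax_r | apply (Rmax_Cmod (a, b))]. }
  rewrite Cmod2_alt; simpl.
  pose proof (exp_taylor1_le a ltac:(lra)) as Hexp.
  pose proof (cos_taylor1_le b ltac:(lra)) as Hcos.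
  destruct (sin_taylor1_le b ltac:(lra)) as [Hsin Hsin_abs].
  pose proof (COS_bound b); pose proof (SIN_bound b).
  assert (Ha' : - (1/2) <= a <= 1/2) by (apply Rabs_le_between; lra).
  set (E := exp a - 1 - a) in *.
  assert (Hre : Rabs (E * cos b + (1 + a) * (cos b - 1)) <= 2 * a ^ 2 + 3/4 * b ^ 2).
  { eapply Rle_trans; [apply Rabs_triang|]; rewrite !Rabs_mult.
    assert (Rabs (cos b) <= 1) by (apply Rabs_le; lra).
    rewrite (Rabs_pos_eq (1 + a)), (Rabs_left1 (cos b - 1)) by lra.
    pose proof (Rabs_pos E); nra. }
  assert (Him : Rabs (E * sin b + a * sin b + (sin b - b)) <= 3 * a ^ 2 + 2 * b ^ 2).
  { eapply Rle_trans; [apply Rabs_triang|].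
    eapply Rle_trans; [apply Rplus_le_compat_r, Rabs_triang|]; rewrite !Rabs_mult.
    assert (Rabs (sin b) <= 1) by (apply Rabs_le; lra).
    assert (Rabs a * Rabs b <= a ^ 2 + b ^ 2).
    { rewrite <- (pow2_abs a), <- (pow2_abs b); pose proof (Rabs_pos a); pose proof (Rabs_pos b); nra. }
    pose proof (Rabs_pos E); pose proof (Rabs_pos a); pose proof (Rabs_pos (sin b)); nra. }
  eapply Rle_trans; [apply Cmod_le_Rabs_add|]; unfold Cexp; simpl.
  replace (exp a * cos b + - (1) + - a) with (E * cos b + (1 + a) * (cos b - 1)) by (unfold E; ring).
  replace (exp a * sin b + - 0 + - b) with (E * sin b + a * sin b + (sin b - b)) by (unfold E; ring).
  lra.
Qed.

Lemma is_derive_Cexp z : @is_derive C_AbsRing C_NormedModule Cexp z (Cexp z).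
Proof.
  split; [apply is_linear_scal_l|].
  intros x Hx eps.
  apply (@is_filter_lim_locally_unique C_AbsRing (AbsRing_NormedModule C_AbsRing)) in Hx; subst x.
  set (M := 5 * (Cmod (Cexp z) + 1)).
  assert (HM : 0 < M) by (pose proof (Cmod_ge_0 (Cexp z)); unfold M; lra).
  assert (Hdelta : 0 < Rmin (1/2) (eps / M)).
  { apply Rmin_glb_lt; [lra | apply Rdiv_lt_0_compat; [apply cond_pos | exact HM]]. }
  exists (mkposreal _ Hdelta); intros y Hy.
  change (Cmod (Cexp y - Cexp z - (y - z) * Cexp z)%C <= eps * Cmod (y - z)%C).
  change (Cmod (y - z)%C < Rmin (1/2) (eps / M)) in Hy.
  set (h := (y - z)%C) in *.
  replace y with (z + h)%C by (unfold h; ring); rewrite Cexp_add.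
  replace (Cexp z * Cexp h - Cexp z - h * Cexp z)%C with (Cexp z * (Cexp h - 1 - h))%C by ring.
  rewrite Cmod_mult.
  pose proof (Rmin_l (1/2) (eps / M)); pose proof (Rmin_r (1/2) (eps / M)).
  assert (Hh : Cmod h * M <= eps) by (apply Rle_div_r; lra).
  pose proof (Cexp_taylor1_le h ltac:(lra)).
  pose proof (Cmod_ge_0 (Cexp z)); pose proof (Cmod_ge_0 h).
  apply Rle_trans with (Cmod (Cexp z) * (5 * Cmod h ^ 2)); [apply Rmult_le_compat_l; lra|].
  unfold M in Hh; simpl; nra.
Qed.

(* [analytic_on] uses [C_NormedModule], while Coquelicot's product and identity rules
   are stated for [AbsRing_NormedModule C_AbsRing]: the two structures differ only in
   their proof components. *)
Lemma is_derive_C_AbsRing f z l :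
  @is_derive C_AbsRing C_NormedModule f z l ->
  @is_derive C_AbsRing (AbsRing_NormedModule C_AbsRing) f z l.
Proof. intros [[Hadd Hscal [M [HM Hbnd]]] Hdiff]; repeat split; eauto. Qed.

Lemma is_derive_C_NormedModule f z l :
  @is_derive C_AbsRing (AbsRing_NormedModule C_AbsRing) f z l ->
  @is_derive C_AbsRing C_NormedModule f z l.
Proof. intros [[Hadd Hscal [M [HM Hbnd]]] Hdiff]; repeat split; eauto. Qed.

Notation ex_Cderive := (@ex_derive C_AbsRing C_NormedModule).

Lemma ex_Cderive_mult f g z :
  ex_Cderive f z -> ex_Cderive g z -> ex_Cderive (fun t => f t * g t)%C z.
Proof.
  intros [df Hf] [dg Hg]; eexists; apply is_derive_C_NormedModule.
  apply (is_derive_mult f g z df dg); [apply is_derive_C_AbsRing ..|]; auto.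
  intros; apply Cmult_comm.
Qed.

Lemma ex_Cderive_comp f g z :
  ex_Cderive f (g z) -> ex_Cderive g z -> ex_Cderive (fun t => f (g t)) z.
Proof.
  intros Hf [l Hg]; apply ex_derive_comp; [exact Hf|].
  exists l; apply is_derive_C_AbsRing, Hg.
Qed.

Lemma ex_Cderive_id z : ex_Cderive (fun t => t) z.
Proof.
  destruct (@ex_derive_id C_AbsRing z) as [l H]; exists l.
  apply is_derive_C_NormedModule, H.
Qed.

Lemma ex_Cderive_Cexp_comp f z : ex_Cderive f z -> ex_Cderive (fun t => Cexp (f t)) z.
Proof. intros; apply ex_Cderive_comp; [eexists; apply is_derive_Cexp | assumption]. Qed.

Lemma ex_Cderive_Csinh_comp f z : ex_Cderive f z -> ex_Cderive (fun t => Csinh (f t)) z.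
Proof.
  intros Hf; unfold Csinh, Cdiv, Cminus.
  apply ex_Cderive_mult; [apply (ex_derive_plus (V := C_NormedModule)) | apply ex_derive_const].
  - apply ex_Cderive_Cexp_comp, Hf.
  - apply (ex_derive_opp (V := C_NormedModule)), ex_Cderive_Cexp_comp.
    apply (ex_derive_opp (V := C_NormedModule)), Hf.
Qed.

Lemma ex_Cderive_Ccosh_comp f z : ex_Cderive f z -> ex_Cderive (fun t => Ccosh (f t)) z.
Proof.
  intros Hf; unfold Ccosh, Cdiv.
  apply ex_Cderive_mult; [apply (ex_derive_plus (V := C_NormedModule)) | apply ex_derive_const].
  - apply ex_Cderive_Cexp_comp, Hf.
  - apply ex_Cderive_Cexp_comp, (ex_derive_opp (V := C_NormedModule)), Hf.
Qed.

Lemma ex_Cderive_half_pi_Csinh z : ex_Cderive (fun t => RtoC (PI / 2) * Csinh t)%C z.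
Proof.
  apply ex_Cderive_mult; [apply ex_derive_const | apply ex_Cderive_Csinh_comp, ex_Cderive_id].
Qed.

Lemma ex_Cderive_psi z : ex_Cderive psi z.
Proof. apply ex_Cderive_Csinh_comp, ex_Cderive_half_pi_Csinh. Qed.

Lemma ex_Cderive_dpsi z : ex_Cderive dpsi z.
Proof.
  apply ex_Cderive_mult; [apply ex_Cderive_mult|].
  - apply ex_derive_const.
  - apply ex_Cderive_Ccosh_comp, ex_Cderive_id.
  - apply ex_Cderive_Ccosh_comp, ex_Cderive_half_pi_Csinh.
Qed.

Lemma analytic_on_psi_pullback d f :
  analytic_on (fun z => exists t, strip d t /\ z = psi t) f ->
  analytic_on (strip d) (fun t => (f (psi t) * dpsi t)%C).
Proof.
  intros Hf z Hz; apply ex_Cderive_mult; [|apply ex_Cderive_dpsi].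
  apply ex_Cderive_comp; [apply Hf; exists z; split; auto | apply ex_Cderive_psi].
Qed.

Lemma Csinh_pair x y : Csinh (x, y) = (sinh x * cos y, cosh x * sin y).
Proof.
  unfold Csinh, Cexp, sinh, cosh; apply injective_projections; simpl;
    rewrite ?cos_neg, ?sin_neg; field.
Qed.

Lemma Ccosh_pair x y : Ccosh (x, y) = (cosh x * cos y, sinh x * sin y).
Proof.
  unfold Ccosh, Cexp, sinh, cosh; apply injective_projections; simpl;
    rewrite ?cos_neg, ?sin_neg; field.
Qed.

Lemma Csinh_opp z : Csinh (- z) = (- Csinh z)%C.
Proof. unfold Csinh; replace (- - z)%C with z by ring; field. Qed.

Lemma Ccosh_opp z : Ccosh (- z) = Ccosh z.
Proof. unfold Ccosh; replace (- - z)%C with z by ring; field. Qed.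

Lemma one_add_Csinh_sq w : (1 + Csinh w * Csinh w = Ccosh w * Ccosh w)%C.
Proof.
  unfold Csinh, Ccosh; pose proof (Cexp_mul_opp w) as Hinv.
  transitivity (Cexp w * Cexp (- w) + ((Cexp w - Cexp (- w)) / 2) * ((Cexp w - Cexp (- w)) / 2))%C;
    [rewrite Hinv; ring | field].
Qed.

Lemma Ccosh_sq_factor w :
  (4 * (Ccosh w * Ccosh w) = (1 + Cexp (- (w + w))) * (1 + Cexp (w + w)))%C.
Proof.
  replace (- (w + w))%C with (- w + - w)%C by ring.
  rewrite !Cexp_add; unfold Ccosh; pose proof (Cexp_mul_opp w) as Hinv.
  transitivity (2 * (Cexp w * Cexp (- w)) + Cexp w * Cexp w + Cexp (- w) * Cexp (- w))%C;
    [field|].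
  transitivity (1 + Cexp w * Cexp w + Cexp (- w) * Cexp (- w) +
                (Cexp w * Cexp (- w)) * (Cexp w * Cexp (- w)))%C; [rewrite Hinv; ring | ring].
Qed.

Lemma Cmod_1_add_Cexp_opp p : Cmod (1 + Cexp (- p))%C = exp (- Re p) * Cmod (1 + Cexp p)%C.
Proof.
  replace (1 + Cexp (- p))%C with (Cexp (- p) * (1 + Cexp p))%C.
  - rewrite Cmod_mult, Cmod_Cexp; reflexivity.
  - pose proof (Cexp_mul_opp p) as Hinv.
    transitivity (Cexp (- p) + Cexp p * Cexp (- p))%C; [ring | rewrite Hinv; ring].
Qed.

Notation left_weight z := (Cmod (1 + Cexp (RtoC (- PI) * Csinh z)))%C.
Notation right_weight z := (Cmod (1 + Cexp (RtoC PI * Csinh z)))%C.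

Section PsiModuli.
Variable z : C.
Let w := (RtoC (PI / 2) * Csinh z)%C.

Lemma PI_Csinh_eq : (RtoC PI * Csinh z = w + w)%C.
Proof. unfold w; destruct (Csinh z); apply injective_projections; simpl; field. Qed.

Lemma Cmod_1_add_psi_sq : Cmod (1 + psi z * psi z)%C = Cmod (Ccosh w) ^ 2.
Proof. unfold psi; fold w; rewrite one_add_Csinh_sq, Cmod_mult; ring. Qed.

Lemma Cmod_dpsi : Cmod (dpsi z) = PI / 2 * Cmod (Ccosh z) * Cmod (Ccosh w).
Proof.
  unfold dpsi; fold w; rewrite !Cmod_mult, Cmod_R, Rabs_pos_eq; [ring|].
  pose proof PI_RGT_0; lra.
Qed.

Lemma weights_mul : left_weight z * right_weight z = 4 * Cmod (Ccosh w) ^ 2.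
Proof.
  replace (RtoC (- PI) * Csinh z)%C with (- (RtoC PI * Csinh z))%C
    by (apply injective_projections; simpl; ring).
  rewrite PI_Csinh_eq, <- Cmod_mult, <- Ccosh_sq_factor, Cmod_mult, Cmod_mult, Cmod_R.
  rewrite Rabs_pos_eq by lra; simpl; ring.
Qed.

Lemma left_weight_pos : 0 < right_weight z -> 0 < left_weight z.
Proof.
  intros Hr.
  replace (RtoC (- PI) * Csinh z)%C with (- (RtoC PI * Csinh z))%C
    by (apply injective_projections; simpl; ring).
  rewrite Cmod_1_add_Cexp_opp; apply Rmult_lt_0_compat; [apply exp_pos | exact Hr].
Qed.

End PsiModuli.

Lemma psi_opp z : psi (- z) = (- psi z)%C.
Proof.
  unfold psi; rewrite Csinh_opp.
  replace (RtoC (PI / 2) * - Csinh z)%C with (- (RtoC (PI / 2) * Csinh z))%C by ring.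
  apply Csinh_opp.
Qed.

Lemma dpsi_opp z : dpsi (- z) = dpsi z.
Proof.
  unfold dpsi; rewrite Csinh_opp, Ccosh_opp.
  replace (RtoC (PI / 2) * - Csinh z)%C with (- (RtoC (PI / 2) * Csinh z))%C by ring.
  rewrite Ccosh_opp; reflexivity.
Qed.

Lemma left_weight_opp z : left_weight (- z) = right_weight z.
Proof.
  rewrite Csinh_opp; do 3 f_equal.
  destruct (Csinh z); apply injective_projections; simpl; ring.
Qed.

Lemma right_weight_opp z : right_weight (- z) = left_weight z.
Proof.
  rewrite Csinh_opp; do 3 f_equal.
  destruct (Csinh z); apply injective_projections; simpl; ring.
Qed.

Lemma exp_ge_taylor3 Z : 0 <= Z -> 1 + Z + Z ^ 2 / 2 + Z ^ 3 / 6 <= exp Z.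
Proof.
  intros HZ; pose proof (exp_ge_taylor Z 3 HZ) as H.
  unfold sum_f_R0 in H; simpl in H; unfold Rdiv in *; simpl; lra.
Qed.

Lemma one_le_exp_mul_one_sub_cos a Z :
  0 < a <= 3/4 -> 1.28 <= Z * a -> 1 <= exp Z * (1 - cos a).
Proof.
  intros Ha HZa; pose proof PI_bounds.
  assert (HZ : 0 <= Z) by nra.
  assert (Hcos : 0.4765 * a ^ 2 <= 1 - cos a).
  { destruct (cos_bound a 0) as [_ Hup]; [lra | lra |].
    assert (Hcos4 : cos a <= 1 - a ^ 2 / 2 + a ^ 2 * a ^ 2 / 24).
    { eapply Rle_trans; [exact Hup|]; right; unfold cos_approx, cos_term; simpl; field. }
    assert (a ^ 2 * a ^ 2 <= 9/16 * a ^ 2) by (apply Rmult_le_compat_r; nra).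
    nra. }
  assert (Hquad : 1.3 * (Z * a) ^ 2 <= (Z + Z ^ 2 / 2 + Z ^ 3 / 6) * a ^ 2).
  { assert (0 <= Z * a ^ 2 * (1 - 0.8 * Z + Z ^ 2 / 6)).
    { apply Rmult_le_pos; [apply Rmult_le_pos; [lra | apply pow2_ge_0]|].
      pose proof (pow2_ge_0 (Z - 2.4)); lra. }
    nra. }
  assert (Hsq : 1.28 ^ 2 <= (Z * a) ^ 2) by (apply pow_incr; lra).
  assert (Hexp : (1 + Z + Z ^ 2 / 2 + Z ^ 3 / 6) * a ^ 2 <= exp Z * a ^ 2).
  { apply Rmult_le_compat_r; [apply pow2_ge_0 | apply exp_ge_taylor3, HZ]. }
  assert (Hlow : 2.12 <= exp Z * a ^ 2) by (pose proof (pow2_ge_0 a); lra).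
  pose proof (exp_pos Z).
  apply Rle_trans with (exp Z * (0.4765 * a ^ 2)); [lra | apply Rmult_le_compat_l; lra].
Qed.

Lemma one_le_exp_mul_one_sub_sin b Z :
  0 < b <= 0.825 -> 2.82 * b <= Z -> 1 <= exp Z * (1 - sin b).
Proof.
  intros Hb HZ.
  pose proof (exp_ge_taylor3 Z ltac:(lra)).
  assert (Hsin : sin b <= b) by (left; apply sin_lt_x; lra).
  assert (1 + 2.82 * b + (2.82 * b) ^ 2 / 2 <= 1 + Z + Z ^ 2 / 2) by nra.
  assert (1 <= (1 + 2.82 * b + (2.82 * b) ^ 2 / 2) * (1 - b)) by nra.
  assert (0 <= Z ^ 3 / 6) by (apply Rdiv_le_0_compat; [apply pow_le |]; lra).
  nra.
Qed.

Lemma exp_neg_le_one_sub_cos a ch S v :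
  0 < a < PI / 2 -> 0 <= S -> ch ^ 2 - S ^ 2 = 1 -> 0 < v ->
  PI ^ 2 * v ^ 2 = PI ^ 2 - 4 * a ^ 2 -> PI / 4 + a / 2 < a * ch ->
  exp (- (PI * v * S)) <= 1 - cos a.
Proof.
  intros Ha HS Hch Hv Hv2 Hfar; pose proof PI_bounds.
  set (b := PI / 2 - a); set (Z := PI * v * S).
  assert (HZ : 0 <= Z) by (unfold Z; apply Rmult_le_pos; [apply Rmult_le_pos|]; lra).
  (* [4 a^2 S^2 = (2a(ch - 1)) (2a(ch + 1)) > b (b + 4a)] and [(PI v)^2 = 2 b (PI + 2a)] *)
  assert (HZa : 2 * b ^ 2 * ((PI + 2 * a) * (b + 4 * a)) <= 4 * (Z * a) ^ 2).
  { assert (b * (b + 4 * a) <= 4 * a ^ 2 * S ^ 2).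
    { replace (4 * a ^ 2 * S ^ 2) with ((2 * a * (ch - 1)) * (2 * a * (ch + 1))) by nra.
      unfold b; apply Rmult_le_compat; lra. }
    replace (4 * (Z * a) ^ 2) with ((PI ^ 2 * v ^ 2) * (4 * a ^ 2 * S ^ 2)) by (unfold Z; ring).
    rewrite Hv2; replace (PI ^ 2 - 4 * a ^ 2) with (2 * b * (PI + 2 * a)) by (unfold b; field).
    replace (2 * b ^ 2 * ((PI + 2 * a) * (b + 4 * a))) with ((2 * b * (PI + 2 * a)) * (b * (b + 4 * a)))
      by ring.
    apply Rmult_le_compat_l; [unfold b|]; nra. }
  assert (Hsuff : 1 <= exp Z * (1 - cos a) -> exp (- Z) <= 1 - cos a).
  { intros H1; rewrite exp_Ropp; pose proof (exp_pos Z).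
    apply Rmult_le_reg_l with (exp Z); [lra|]; rewrite Rinv_r; lra. }
  apply Hsuff; destruct (Rle_dec a (3/4)) as [Hsmall | Hlarge].
  - apply one_le_exp_mul_one_sub_cos; [lra|].
    assert (PI ^ 2 / 2 <= (PI + 2 * a) * (b + 4 * a)) by (unfold b; nra).
    assert ((PI * b / 2) ^ 2 <= (Z * a) ^ 2) by nra.
    assert (1.28 <= PI * b / 2) by (unfold b; nra).
    assert (0 <= Z * a) by (apply Rmult_le_pos; lra).
    nra.
  - replace (cos a) with (sin b) by (unfold b; apply sin_shift).
    apply one_le_exp_mul_one_sub_sin; [unfold b; lra|].
    assert (16 * a ^ 2 <= (PI + 2 * a) * (b + 4 * a)) by (unfold b; nra).
    assert (a ^ 2 * (8 * b ^ 2) <= a ^ 2 * Z ^ 2) by nra.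
    assert (8 * b ^ 2 <= Z ^ 2) by (apply Rmult_le_reg_l with (a ^ 2); nra).
    nra.
Qed.

Lemma sinh_nonpos x : x <= 0 -> sinh x <= 0.
Proof.
  intros Hx; destruct (Req_dec x 0) as [-> | Hx0]; [rewrite sinh_0; lra|].
  rewrite <- sinh_0; left; apply sinh_lt; lra.
Qed.

Lemma cosh_pos x : 0 < cosh x.
Proof. unfold cosh; pose proof (exp_pos x); pose proof (exp_pos (- x)); lra. Qed.

Lemma cosh_sq_sub_sinh_sq x : cosh x ^ 2 - sinh x ^ 2 = 1.
Proof.
  unfold cosh, sinh; pose proof (exp_mul_exp_opp x) as H.
  replace (((exp x + exp (- x)) / 2) ^ 2 - ((exp x - exp (- x)) / 2) ^ 2)
    with (exp x * exp (- x)) by field; exact H.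
Qed.

Lemma cos_abs x : cos (Rabs x) = cos x.
Proof. unfold Rabs; destruct (Rcase_abs x); [apply cos_neg | reflexivity]. Qed.

Lemma Cmod_1_add_Cexp_sq p q : Cmod (1 + Cexp (p, q))%C ^ 2 = 1 + 2 * exp p * cos q + exp p ^ 2.
Proof.
  rewrite Cmod2_alt; unfold Cexp; simpl.
  pose proof (sin2_cos2 q) as Hsc; unfold Rsqr in Hsc; nra.
Qed.

Lemma Cmod_1_add_Cexp_bounds p q a :
  p <= 0 -> 0 <= a < PI / 2 -> (Rabs q <= PI / 2 + a \/ exp p <= 1 - cos a) ->
  cos a <= Cmod (1 + Cexp (p, q))%C <= 2.
Proof.
  intros Hp Ha Hcase; pose proof PI_RGT_0.
  pose proof (Cmod_1_add_Cexp_sq p q) as Hmod.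
  set (r := exp p) in Hmod, Hcase; set (m := Cmod _) in Hmod |- *.
  assert (Hm : 0 <= m) by apply Cmod_ge_0.
  assert (Hr : 0 < r <= 1).
  { split; [apply exp_pos | unfold r; rewrite <- exp_0; apply exp_le_exp_compat, Hp]. }
  assert (Hca : 0 <= cos a) by (apply cos_ge_0; lra).
  pose proof (COS_bound q); pose proof (sin2_cos2 a) as Hsc; unfold Rsqr in Hsc.
  assert (Hlow : cos a ^ 2 <= m ^ 2).
  { rewrite Hmod; destruct Hcase as [Hnear | Hfar].
    - (* [1 + 2 r cos q + r^2 >= (r - sin a)^2 + cos a ^ 2] *)
      assert (- sin a <= cos q).
      { rewrite <- cos_abs, sin_cos, Ropp_involutive.
        apply cos_decr_1; [apply Rabs_pos | lra ..]. }
      pose proof (pow2_ge_0 (r - sin a)); nra.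
    - (* [1 + 2 r cos q + r^2 >= (1 - r)^2] *)
      nra. }
  assert (Hup : m ^ 2 <= 2 ^ 2).
  { rewrite Hmod; assert (r * cos q <= r * 1) by (apply Rmult_le_compat_l; lra); nra. }
  split; nra.
Qed.

Lemma right_weight_bounds x y : x <= 0 -> Rabs y < PI / 2 ->
  cos (PI / 2 * Rabs (sin y)) <= right_weight (x, y) <= 2.
Proof.
  intros Hx Hy; pose proof PI_bounds; apply Rabs_def2 in Hy.
  replace (RtoC PI * Csinh (x, y))%C with ((PI * sinh x * cos y)%R, (PI * cosh x * sin y)%R)
    by (rewrite Csinh_pair; apply injective_projections; simpl; ring).
  assert (Hv : 0 < cos y) by (apply cos_gt_0; lra).
  pose proof (sinh_nonpos x Hx); pose proof (cosh_pos x).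
  set (a := PI / 2 * Rabs (sin y)).
  assert (Hsin : Rabs (sin y) < 1).
  { pose proof (sin2_cos2 y) as Hsc; unfold Rsqr in Hsc.
    pose proof (pow2_abs (sin y)) as Habs; pose proof (Rabs_pos (sin y)); simpl in Habs; nra. }
  assert (Ha : 0 <= a < PI / 2) by (pose proof (Rabs_pos (sin y)); unfold a; nra).
  apply Cmod_1_add_Cexp_bounds; [assert (0 <= PI * cos y) by nra; nra | exact Ha |].
  assert (HQ : Rabs (PI * cosh x * sin y) = 2 * a * cosh x).
  { unfold a; rewrite !Rabs_mult, (Rabs_pos_eq PI), (Rabs_pos_eq (cosh x)); [field | lra | lra]. }
  destruct (Rle_dec (a * cosh x) (PI / 4 + a / 2)) as [Hnear | Hfar]; [left; lra | right].
  assert (Ha0 : 0 < a) by (destruct (Req_dec a 0) as [E | E]; [rewrite E in Hfar |]; lra).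
  replace (PI * sinh x * cos y) with (- (PI * cos y * - sinh x)) by ring.
  apply (exp_neg_le_one_sub_cos a (cosh x)); try lra.
  - rewrite <- (cosh_sq_sub_sinh_sq x); ring.
  - unfold a; rewrite Rpow_mult_distr, pow2_abs.
    replace (cos y ^ 2) with (1 - sin y ^ 2)
      by (pose proof (sin2_cos2 y); unfold Rsqr in *; simpl; lra).
    field.
Qed.

Lemma Rpower_weights_le K a b c A B m :
  0 < K -> 0 < a -> 0 < b -> 0 < c <= 1 -> 0 < A -> c <= B <= 2 -> 0 < m ->
  A * B = 4 * m ^ 2 ->
  K * Rpower (m ^ 2) (- (a + 1) / 2) * m <=
  Rpower 2 (Rmax a b) * K / Rpower c ((Rmax a b - Rmin a b) / 2) /
  (Rpower A (a / 2) * Rpower B (b / 2)).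
Proof.
  intros HK Ha Hb Hc HA HB Hm HAB.
  assert (Hlog : ln A + ln B = 2 * ln 2 + 2 * ln m).
  { rewrite <- !ln_mult, HAB by (try apply pow_lt; lra).
    replace (4 * m ^ 2) with ((2 * m) * (2 * m)) by ring.
    rewrite !ln_mult; lra. }
  assert (Hcb : ln c <= ln B) by (apply ln_le; lra).
  assert (Hb2 : ln B <= ln 2) by (apply ln_le; lra).
  assert (Hc1 : ln c <= 0) by (rewrite <- ln_1; apply ln_le; lra).
  replace (K * Rpower (m ^ 2) (- (a + 1) / 2) * m) with (K * exp (- a * ln m)).
  2: { unfold Rpower; rewrite <- (exp_ln m) at 3 by lra.
       rewrite ln_pow, Rmult_assoc, <- exp_plus by lra; do 2 f_equal; simpl; field. }
  replace (Rpower 2 (Rmax a b) * K / Rpower c ((Rmax a b - Rmin a b) / 2) /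
           (Rpower A (a / 2) * Rpower B (b / 2)))
    with (K * exp (Rmax a b * ln 2 - (Rmax a b - Rmin a b) / 2 * ln c - a / 2 * ln A - b / 2 * ln B)).
  2: { unfold Rpower, Rminus; rewrite !exp_plus, !exp_Ropp.
       pose proof (exp_pos (Rmax a b * ln 2)); pose proof (exp_pos ((Rmax a b + - Rmin a b) / 2 * ln c)).
       pose proof (exp_pos (a / 2 * ln A)); pose proof (exp_pos (b / 2 * ln B)).
       field; repeat split; lra. }
  apply Rmult_le_compat_l; [lra|]; apply exp_le_exp_compat.
  destruct (Rle_dec a b) as [Hab | Hab].
  - rewrite Rmax_right, Rmin_left by lra.
    assert (0 <= (b - a) * (2 * ln 2 - ln c - ln B)) by (apply Rmult_le_pos; lra); nra.
  - rewrite Rmax_left, Rmin_right by lra.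
    assert (0 <= (a - b) * (ln B - ln c)) by (apply Rmult_le_pos; lra); nra.
Qed.

Lemma pullback_bound_left K a b c (f : C -> C) z :
  0 < K -> 0 < a -> 0 < b -> 0 < c <= 1 -> c <= right_weight z <= 2 ->
  Cmod (f (psi z)) <= K * Rpower (Cmod (1 + psi z * psi z)%C) (- (a + 1) / 2) ->
  Cmod (f (psi z) * dpsi z)%C <=
    PI / 2 * (Rpower 2 (Rmax a b) * K / Rpower c ((Rmax a b - Rmin a b) / 2)) * Cmod (Ccosh z) /
    (Rpower (left_weight z) (a / 2) * Rpower (right_weight z) (b / 2)).
Proof.
  intros HK Ha Hb Hc HB Hf.
  set (m := Cmod (Ccosh (RtoC (PI / 2) * Csinh z))).
  assert (HA : 0 < left_weight z) by (apply left_weight_pos; lra).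
  pose proof (weights_mul z) as HAB; fold m in HAB.
  assert (Hm : 0 < m).
  { destruct (Cmod_ge_0 (Ccosh (RtoC (PI / 2) * Csinh z))) as [Hpos | Hzero]; [exact Hpos|].
    fold m in Hzero; rewrite <- Hzero in HAB; simpl in HAB; nra. }
  rewrite Cmod_1_add_psi_sq in Hf; fold m in Hf.
  rewrite Cmod_mult, Cmod_dpsi; fold m.
  pose proof (Rpower_weights_le K a b c _ _ m HK Ha Hb Hc HA HB Hm HAB) as Hweights.
  pose proof PI_RGT_0; pose proof (Cmod_ge_0 (Ccosh z)).
  apply Rle_trans with (K * Rpower (m ^ 2) (- (a + 1) / 2) * (PI / 2 * Cmod (Ccosh z) * m)).
  { apply Rmult_le_compat_r; [apply Rmult_le_pos; [apply Rmult_le_pos|]|]; lra. }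
  replace (K * Rpower (m ^ 2) (- (a + 1) / 2) * (PI / 2 * Cmod (Ccosh z) * m))
    with (PI / 2 * Cmod (Ccosh z) * (K * Rpower (m ^ 2) (- (a + 1) / 2) * m)) by ring.
  set (L := Rpower 2 (Rmax a b) * K / Rpower c ((Rmax a b - Rmin a b) / 2)) in *.
  set (W := Rpower (left_weight z) (a / 2) * Rpower (right_weight z) (b / 2)) in *.
  replace (PI / 2 * L * Cmod (Ccosh z) / W) with (PI / 2 * Cmod (Ccosh z) * (L / W))
    by (unfold Rdiv; ring).
  apply Rmult_le_compat_l; [apply Rmult_le_pos|]; lra.
Qed.

Lemma pullback_bound_right K a b c (f : C -> C) z :
  0 < K -> 0 < a -> 0 < b -> 0 < c <= 1 -> c <= left_weight z <= 2 ->
  Cmod (f (psi z)) <= K * Rpower (Cmod (1 + psi z * psi z)%C) (- (b + 1) / 2) ->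
  Cmod (f (psi z) * dpsi z)%C <=
    PI / 2 * (Rpower 2 (Rmax a b) * K / Rpower c ((Rmax a b - Rmin a b) / 2)) * Cmod (Ccosh z) /
    (Rpower (left_weight z) (a / 2) * Rpower (right_weight z) (b / 2)).
Proof.
  intros HK Ha Hb Hc HA Hf.
  pose proof (pullback_bound_left K b a c (fun u => f (- u)%C) (- z)%C HK Hb Ha Hc) as Hmirror.
  rewrite left_weight_opp, right_weight_opp, psi_opp, dpsi_opp, Ccosh_opp, Rmax_comm, Rmin_comm,
    (Rmult_comm (Rpower (right_weight z) (b / 2))) in Hmirror.
  replace (- - psi z)%C with (psi z) in Hmirror by ring.
  replace (- psi z * - psi z)%C with (psi z * psi z)%C in Hmirror by ring.
  apply Hmirror; assumption.
Qed.

Lemma pullback_bound K a b c (f : C -> C) z :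
  0 < K -> 0 < a -> 0 < b -> 0 < c <= 1 ->
  (Re z < 0 -> c <= right_weight z <= 2) -> (0 <= Re z -> c <= left_weight z <= 2) ->
  (Re z < 0 -> Cmod (f (psi z)) <= K * Rpower (Cmod (1 + psi z * psi z)%C) (- (a + 1) / 2)) ->
  (0 <= Re z -> Cmod (f (psi z)) <= K * Rpower (Cmod (1 + psi z * psi z)%C) (- (b + 1) / 2)) ->
  Cmod (f (psi z) * dpsi z)%C <=
    PI / 2 * (Rpower 2 (Rmax a b) * K / Rpower c ((Rmax a b - Rmin a b) / 2)) * Cmod (Ccosh z) /
    (Rpower (left_weight z) (a / 2) * Rpower (right_weight z) (b / 2)).
Proof.
  intros HK Ha Hb Hc Hwneg Hwpos Hfneg Hfpos.
  destruct (Rlt_le_dec (Re z) 0) as [Hz | Hz].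
  - apply pullback_bound_left; auto.
  - apply pullback_bound_right; auto.
Qed.

Lemma weight_bounds c x y : Rabs y < PI / 2 -> c <= cos (PI / 2 * Rabs (sin y)) ->
  (x < 0 -> c <= right_weight (x, y) <= 2) /\ (0 <= x -> c <= left_weight (x, y) <= 2).
Proof.
  intros Hy Hc; split; intros Hx.
  - pose proof (right_weight_bounds x y ltac:(lra) Hy); lra.
  - rewrite <- (right_weight_opp (x, y)).
    assert (Hy' : Rabs (- y) < PI / 2) by (rewrite Rabs_Ropp; exact Hy).
    pose proof (right_weight_bounds (- x) (- y) ltac:(lra) Hy') as Hb.
    rewrite sin_neg, Rabs_Ropp in Hb; change (- (x, y))%C with (- x, - y); lra.
Qed.

Lemma cos_half_pi_sin_bounds d y : 0 < d < PI / 2 -> Rabs y < d ->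
  0 < cos (PI / 2 * sin d) <= cos (PI / 2 * Rabs (sin y)).
Proof.
  intros Hd Hy; pose proof PI_RGT_0; apply Rabs_def2 in Hy.
  assert (Hsd : 0 <= sin d < 1).
  { split; [apply sin_ge_0; lra | rewrite <- sin_PI2; apply sin_increasing_1; lra]. }
  assert (Hsy : Rabs (sin y) <= sin d).
  { destruct (Rle_dec 0 y).
    - rewrite Rabs_pos_eq by (apply sin_ge_0; lra); apply sin_incr_1; lra.
    - rewrite <- Rabs_Ropp, <- sin_neg, Rabs_pos_eq by (apply sin_ge_0; lra).
      apply sin_incr_1; lra. }
  pose proof (Rabs_pos (sin y)).
  split; [apply cos_gt_0 | apply cos_decr_1]; nra.
Qed.

Lemma Csinh_RtoC x : Csinh (RtoC x) = RtoC (sinh x).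
Proof. unfold RtoC; rewrite Csinh_pair, cos_0, sin_0, Rmult_1_r, Rmult_0_r; reflexivity. Qed.

Lemma Cexp_RtoC x : Cexp (RtoC x) = RtoC (exp x).
Proof. unfold Cexp, RtoC; simpl; rewrite cos_0, sin_0, Rmult_1_r, Rmult_0_r; reflexivity. Qed.

Lemma weight_RtoC k x : Cmod (1 + Cexp (RtoC k * Csinh (RtoC x)))%C = 1 + exp (k * sinh x).
Proof.
  rewrite Csinh_RtoC, <- RtoC_mult, Cexp_RtoC, <- RtoC_plus, Cmod_R.
  apply Rabs_pos_eq; pose proof (exp_pos (k * sinh x)); lra.
Qed.

Lemma Cmod_Ccosh_RtoC x : Cmod (Ccosh (RtoC x)) = cosh x.
Proof.
  unfold RtoC; rewrite Ccosh_pair, cos_0, sin_0, Rmult_1_r, Rmult_0_r.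
  change (cosh x, 0) with (RtoC (cosh x)); rewrite Cmod_R; apply Rabs_pos_eq.
  left; apply cosh_pos.
Qed.

Lemma Rpower_1_l y : Rpower 1 y = 1.
Proof. unfold Rpower; rewrite ln_1, Rmult_0_r; apply exp_0. Qed.

Theorem lemma9 (d K alpha beta : R) (f : C -> C) :
  0 < d < PI / 2 -> 0 < K -> 0 < alpha -> 0 < beta ->
  analytic_on (fun z => exists t, strip d t /\ z = psi t) f ->
  (forall t : C, strip d t -> Re t < 0 ->
     Cmod (f (psi t)) <=
       K * Rpower (Cmod (1 + psi t * psi t)%C) (- (alpha + 1) / 2)) ->
  (forall t : C, strip d t -> 0 <= Re t ->
     Cmod (f (psi t)) <=
       K * Rpower (Cmod (1 + psi t * psi t)%C) (- (beta + 1) / 2)) ->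
  let mu := Rmin alpha beta in
  let nu := Rmax alpha beta in
  LDE (Rpower 2 nu * K / Rpower (cos (PI / 2 * sin d)) ((nu - mu) / 2))
      (Rpower 2 nu * K) alpha beta d
      (fun t => (f (psi t) * dpsi t)%C).
Proof.
  intros Hd HK Ha Hb Hf Hfneg Hfpos mu nu.
  split; [|split].
  - apply analytic_on_psi_pullback, Hf.
  - intros [x y] Hz; unfold strip in Hz; simpl in Hz.
    destruct (cos_half_pi_sin_bounds d y Hd Hz) as [Hc0 Hcy].
    destruct (weight_bounds (cos (PI / 2 * sin d)) x y ltac:(lra) Hcy) as [Hwneg Hwpos].
    apply pullback_bound; auto; [split; [exact Hc0 | apply COS_bound] | ..]; simpl; auto.
  - intros x.
    assert (Hx : strip d (RtoC x)) by (unfold strip; simpl; rewrite Rabs_R0; lra).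
    assert (Hc : 1 <= cos (PI / 2 * Rabs (sin 0))) by (rewrite sin_0, Rabs_R0, Rmult_0_r, cos_0; lra).
    destruct (weight_bounds 1 x 0 ltac:(rewrite Rabs_R0; pose proof PI_RGT_0; lra) Hc) as [Hwneg Hwpos].
    eapply Rle_trans; [apply (pullback_bound K alpha beta 1); auto; lra|].
    rewrite !weight_RtoC, Cmod_Ccosh_RtoC, Rpower_1_l, Rdiv_1_r; right; reflexivity.
Qed.
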